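(* Let $a,b,m\in\mathbb N_0$ with $a+b\ge1$, let $\mathcal R(m,a,b)$ be the number of red balls in an $(a,b)$-Pólya urn after $m$ balls have been added, and let $\mu(m,a,b)=a\big(1+m/(a+b)\big)$. Then for every $t>0$, \[\mathbb P\big(|\mathcal R(m,a,b)-\mu(m,a,b)|\ge t\,\mu(m,a,b)\big)\le 2\exp\Big(-\frac{t^2a^2}{8(a+b)}\Big).\]
   Context: An $(a,b)$-Pólya urn starts with $a$ red and $b$ blue balls; at each step a ball is drawn uniformly at random and returned together with one additional ball of the same colour. *)

From Stdlib Require Import Reals Lra Lia.
Open Scope R_scope.

(* Distribution of the number of red balls in an (a,b)-Polya urn.
   urn_pmf a b m r = P(R(m,a,b) = r), defined by the Markov chain of the urn:
   initially a red balls; at step m' (when a+b+m' balls are present and r'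
   are red), a red ball is added with probability r'/(a+b+m'), otherwise a
   blue ball is added. *)
Fixpoint urn_pmf (a b : nat) (m r : nat) : R :=
  match m with
  | O => if Nat.eqb r a then 1 else 0
  | S m' =>
      (match r with
       | O => 0
       | S r' => urn_pmf a b m' r' * (INR r' / INR (a + b + m'))
       end)
      + urn_pmf a b m' r * ((INR (a + b + m') - INR r) / INR (a + b + m'))
  end.

Definition urn_mu (a b m : nat) : R := INR a * (1 + INR m / INR (a + b)).

(* P(|R(m,a,b) - mu| >= t mu); the number of red balls is at most a+m. *)
Definition urn_dev_prob (a b m : nat) (t : R) : R :=
  sum_f_R0 (fun r =>
    if Rle_dec (t * urn_mu a b m) (Rabs (INR r - urn_mu a b m))
    then urn_pmf a b m r else 0) (a + m).

From Stdlib Require Import Reals Lra Lia.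
From Coquelicot Require Import Coquelicot.
Open Scope R_scope.

(* Let n = a + b and X_m = R(m,a,b) / (n + m) be the proportion of red balls, a
   martingale starting at a/n.  One step of the urn moves X_m by y(1 - p) with
   probability p = X_m and by -y p otherwise, where y = 1/(n + m + 1); the
   two-point Hoeffding bound p e^{y(1-p)} + (1-p) e^{-yp} <= e^{y^2} then gives
   E e^{l (X_{m+1} - a/n)} <= E e^{l (X_m - a/n)} e^{l^2 y^2}, and since
   sum_m 1/(n+m+1)^2 <= 1/n we get E e^{l (X_m - a/n)} <= e^{l^2/n} for every real l.
   As |R - mu| >= t mu means |X_m - a/n| >= t a/n, the Chernoff bound with
   l = +-t a/2 yields 2 e^{-t^2 a^2/(4n)}. *)

Lemma exp_le (x y : R) : x <= y -> exp x <= exp y.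
Proof. intros [Hlt | ->]; [left; apply exp_increasing |]; lra. Qed.

Lemma exp_le_quadratic (z : R) : z <= 1 -> exp z <= 1 + z + z ^ 2.
Proof.
  intros Hz.
  (* h' x = x (1 - x) e^{-x} has the sign of x for x <= 1, so h z >= h 0 = 1. *)
  set (h := fun x => (1 + x + x ^ 2) * exp (- x)).
  assert (Hh' : forall x, is_derive h x ((x - x ^ 2) * exp (- x))).
  { intros x. unfold h. auto_derive; auto. ring. }
  destruct (MVT_gen h 0 z (fun x => (x - x ^ 2) * exp (- x))) as [c [Hc Hmvt]].
  { intros x _. apply Hh'. }
  { intros x _. apply continuity_pt_filterlim, (ex_derive_continuous (V := R_NormedModule)).
    eexists. apply Hh'. }
  assert (Hh_ge : 1 <= h z).
  { assert (Hh0 : h 0 = 1) by (unfold h; rewrite Ropp_0, exp_0; ring).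
    pose proof (exp_pos (- c)).
    unfold Rmin, Rmax in Hc.
    destruct (Rle_dec 0 z).
    - assert (0 <= (c - c ^ 2) * exp (- c)) by (apply Rmult_le_pos; nra).
      nra.
    - assert (0 <= (c ^ 2 - c) * exp (- c)) by (apply Rmult_le_pos; nra).
      nra. }
  unfold h in Hh_ge.
  assert (Hinv : exp (- z) * exp z = 1) by (rewrite <- exp_plus, Rplus_opp_l; apply exp_0).
  pose proof (exp_pos z).
  nra.
Qed.

Lemma two_point_mgf_le (p y : R) : 0 <= p <= 1 ->
  p * exp (y * (1 - p)) + (1 - p) * exp (- (y * p)) <= exp (y ^ 2).
Proof.
  intros Hp.
  destruct (Rle_dec (Rabs y) 1) as [Hy | Hy].
  - apply Rabs_le_between in Hy.
    pose proof (exp_le_quadratic (y * (1 - p)) ltac:(nra)).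
    pose proof (exp_le_quadratic (- (y * p)) ltac:(nra)).
    pose proof (exp_ineq1_le (y ^ 2)).
    assert (p * exp (y * (1 - p)) <= p * (1 + y * (1 - p) + (y * (1 - p)) ^ 2))
      by (apply Rmult_le_compat_l; lra).
    assert ((1 - p) * exp (- (y * p)) <= (1 - p) * (1 + - (y * p) + (- (y * p)) ^ 2))
      by (apply Rmult_le_compat_l; lra).
    nra.
  - assert (Habs_sq : Rabs y <= y ^ 2).
    { rewrite <- (pow2_abs y). nra. }
    pose proof (Rle_abs y). pose proof (Rle_abs (- y)). rewrite Rabs_Ropp in *.
    pose proof (exp_le (y * (1 - p)) (y ^ 2) ltac:(nra)).
    pose proof (exp_le (- (y * p)) (y ^ 2) ltac:(nra)).
    assert (p * exp (y * (1 - p)) <= p * exp (y ^ 2)) by (apply Rmult_le_compat_l; lra).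
    assert ((1 - p) * exp (- (y * p)) <= (1 - p) * exp (y ^ 2))
      by (apply Rmult_le_compat_l; lra).
    lra.
Qed.

Lemma proportion_step_mgf_le (N r l A : R) : 0 < N -> 0 <= r <= N ->
  r / N * exp (l * ((r + 1) / (N + 1) - A))
    + (N - r) / N * exp (l * (r / (N + 1) - A))
  <= exp (l * (r / N - A)) * exp ((l / (N + 1)) ^ 2).
Proof.
  intros HN Hr.
  set (p := r / N). set (y := l / (N + 1)).
  assert (Hp : 0 <= p <= 1).
  { unfold p. split; [apply Rdiv_le_0_compat; lra |].
    apply (Rmult_le_reg_r N); [lra |].
    unfold Rdiv. rewrite Rmult_assoc, Rinv_l; lra. }
  replace (l * ((r + 1) / (N + 1) - A)) with (l * (p - A) + y * (1 - p))
    by (unfold y, p; field; lra).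
  replace (l * (r / (N + 1) - A)) with (l * (p - A) + - (y * p))
    by (unfold y, p; field; lra).
  replace ((N - r) / N) with (1 - p) by (unfold p; field; lra).
  rewrite !exp_plus.
  pose proof (two_point_mgf_le p y Hp).
  pose proof (exp_pos (l * (p - A))).
  nra.
Qed.

Lemma inv_sq_succ_le (N : R) : 0 < N -> (/ (N + 1)) ^ 2 <= / N - / (N + 1).
Proof.
  intros HN.
  replace (/ N - / (N + 1)) with (/ (N * (N + 1))) by (field; lra).
  replace ((/ (N + 1)) ^ 2) with (/ ((N + 1) * (N + 1))) by (field; lra).
  apply Rinv_le_contravar; nra.
Qed.

Lemma sum_f_R0_last (f : nat -> R) (K : nat) :
  (forall i, (i < K)%nat -> f i = 0) -> sum_f_R0 f K = f K.
Proof.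
  induction K as [| K IH]; intros Hf; simpl; [reflexivity |].
  rewrite IH by (intros; apply Hf; lia).
  rewrite Hf by lia. ring.
Qed.

Lemma dev_indicator_le (l s d : R) : 0 <= l ->
  (if Rle_dec s (Rabs d) then 1 else 0) <= (exp (l * d) + exp (- l * d)) * exp (- (l * s)).
Proof.
  intros Hl.
  pose proof (exp_pos (l * d)). pose proof (exp_pos (- l * d)). pose proof (exp_pos (- (l * s))).
  destruct (Rle_dec s (Rabs d)) as [Hs | _]; [| nra].
  rewrite Rmult_plus_distr_r, <- !exp_plus.
  destruct (Rle_dec 0 d).
  - rewrite Rabs_right in Hs by lra.
    pose proof (exp_ineq1_le (l * d + - (l * s))).
    pose proof (exp_pos (- l * d + - (l * s))).
    nra.
  - rewrite Rabs_left in Hs by lra.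
    pose proof (exp_ineq1_le (- l * d + - (l * s))).
    pose proof (exp_pos (l * d + - (l * s))).
    nra.
Qed.

Section PolyaUrn.

Variables a b : nat.

Definition urn_expect (m : nat) (g : nat -> R) : R :=
  sum_f_R0 (fun r => urn_pmf a b m r * g r) (a + m).

Definition urn_dev (m r : nat) : R := INR r / INR (a + b + m) - INR a / INR (a + b).

Lemma urn_pmf_out m r : (a + m < r)%nat -> urn_pmf a b m r = 0.
Proof.
  revert r; induction m as [| m IH]; intros r Hr; simpl.
  - destruct (Nat.eqb_spec r a); [lia | reflexivity].
  - destruct r as [| r]; [lia |].
    rewrite (IH r), (IH (S r)) by lia. ring.
Qed.

Lemma urn_pmf_ge0 m r : 0 <= urn_pmf a b m r.
Proof.
  revert r; induction m as [| m IH]; intros r; simpl.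
  - destruct (Nat.eqb r a); lra.
  - set (N := INR (a + b + m)).
    assert (HN : 0 <= N) by apply pos_INR.
    (* When N = 0 the junk value x / 0 = 0 keeps every factor nonnegative. *)
    assert (Hdiv : forall x, 0 <= x -> 0 <= x / N).
    { intros x Hx. destruct (Req_dec N 0) as [-> | HN0].
      - unfold Rdiv. rewrite Rinv_0. lra.
      - apply Rdiv_le_0_compat; lra. }
    apply Rplus_le_le_0_compat.
    + destruct r as [| r]; [lra |].
      apply Rmult_le_pos; [apply IH | apply Hdiv, pos_INR].
    + destruct (Nat.le_gt_cases r (a + b + m)) as [Hr | Hr].
      * apply Rmult_le_pos; [apply IH | apply Hdiv].
        apply le_INR in Hr. unfold N. lra.
      * rewrite urn_pmf_out by lia. lra.
Qed.

Lemma urn_expect_0 g : urn_expect 0 g = g a.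
Proof.
  unfold urn_expect. rewrite Nat.add_0_r, sum_f_R0_last; simpl.
  - rewrite Nat.eqb_refl. ring.
  - intros i Hi. destruct (Nat.eqb_spec i a); [lia | ring].
Qed.

Lemma urn_expect_S m g :
  urn_expect (S m) g =
  urn_expect m (fun r => INR r / INR (a + b + m) * g (S r)
                         + (INR (a + b + m) - INR r) / INR (a + b + m) * g r).
Proof.
  unfold urn_expect. rewrite Nat.add_succ_r.
  set (N := INR (a + b + m)).
  transitivity (sum_f_R0 (fun r =>
      match r with O => 0 | S r' => urn_pmf a b m r' * (INR r' / N) * g r end
      + urn_pmf a b m r * ((N - INR r) / N) * g r) (S (a + m))).
  { apply sum_eq. intros i _. simpl urn_pmf. fold N. destruct i; ring. }
  rewrite plus_sum, decomp_sum, tech5 by lia. simpl pred.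
  rewrite (urn_pmf_out m (S (a + m))) by lia.
  transitivity (sum_f_R0 (fun r => urn_pmf a b m r * (INR r / N) * g (S r)) (a + m)
    + sum_f_R0 (fun r => urn_pmf a b m r * ((N - INR r) / N) * g r) (a + m)); [ring |].
  rewrite <- plus_sum. apply sum_eq. intros i _. ring.
Qed.

Lemma urn_expect_le m f g :
  (forall r, (r <= a + m)%nat -> f r <= g r) -> urn_expect m f <= urn_expect m g.
Proof.
  intros Hfg. apply sum_Rle. intros r Hr.
  apply Rmult_le_compat_l; [apply urn_pmf_ge0 | apply Hfg, Hr].
Qed.

Lemma urn_expect_plus m f g :
  urn_expect m (fun r => f r + g r) = urn_expect m f + urn_expect m g.
Proof. unfold urn_expect. rewrite <- plus_sum. apply sum_eq. intros i _. ring. Qed.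

Lemma urn_expect_scal m f c : urn_expect m (fun r => f r * c) = urn_expect m f * c.
Proof.
  unfold urn_expect. rewrite Rmult_comm, scal_sum. apply sum_eq. intros i _. ring.
Qed.

Hypothesis urn_nonempty : (1 <= a + b)%nat.

Lemma urn_mgf_le l m :
  urn_expect m (fun r => exp (l * urn_dev m r))
  <= exp (l ^ 2 * (/ INR (a + b) - / INR (a + b + m))).
Proof.
  unfold urn_dev. induction m as [| m IH].
  - rewrite urn_expect_0, Nat.add_0_r. apply exp_le. ring_simplify. lra.
  - rewrite urn_expect_S.
    set (N := INR (a + b + m)).
    assert (HN : 1 <= N) by (apply (le_INR 1); lia).
    replace (INR (a + b + S m)) with (N + 1) by (unfold N; rewrite Nat.add_succ_r, S_INR; ring).
    apply Rle_trans with
      (urn_expect m (fun r => exp (l * (INR r / N - INR a / INR (a + b)))) * exp ((l / (N + 1)) ^ 2)).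
    { rewrite <- urn_expect_scal. apply urn_expect_le. intros r Hr.
      rewrite S_INR. apply proportion_step_mgf_le; [lra |].
      split; [apply pos_INR | apply le_INR; lia]. }
    apply Rle_trans with (exp (l ^ 2 * (/ INR (a + b) - / N)) * exp ((l / (N + 1)) ^ 2)).
    { apply Rmult_le_compat_r; [left; apply exp_pos | apply IH]. }
    rewrite <- exp_plus. apply exp_le.
    pose proof (inv_sq_succ_le N ltac:(lra)).
    replace ((l / (N + 1)) ^ 2) with (l ^ 2 * (/ (N + 1)) ^ 2) by (field; lra).
    assert (0 <= l ^ 2) by nra.
    nra.
Qed.

Corollary urn_mgf_le_init l m :
  urn_expect m (fun r => exp (l * urn_dev m r)) <= exp (l ^ 2 / INR (a + b)).
Proof.
  eapply Rle_trans; [apply urn_mgf_le | apply exp_le].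
  assert (0 < / INR (a + b + m)) by (apply Rinv_0_lt_compat, lt_0_INR; lia).
  assert (0 <= l ^ 2) by nra.
  unfold Rdiv. nra.
Qed.

Lemma urn_dev_prob_eq m t :
  urn_dev_prob a b m t =
  urn_expect m (fun r => if Rle_dec (t * INR a / INR (a + b)) (Rabs (urn_dev m r)) then 1 else 0).
Proof.
  set (n := INR (a + b)). set (N := INR (a + b + m)).
  assert (Hn : 0 < n) by (apply lt_0_INR; lia).
  assert (HN : 0 < N) by (apply lt_0_INR; lia).
  assert (HNn : N = n + INR m) by (unfold N, n; apply plus_INR).
  assert (Hmu : forall r, INR r - urn_mu a b m = N * urn_dev m r).
  { intros r. unfold urn_mu, urn_dev. fold n N. rewrite HNn in *. field. lra. }
  assert (Htmu : t * urn_mu a b m = N * (t * INR a / n)).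
  { unfold urn_mu. fold n. rewrite HNn. field. lra. }
  apply sum_eq. intros r _.
  rewrite Hmu, Htmu, Rabs_mult, (Rabs_right N) by lra.
  destruct (Rle_dec (N * (t * INR a / n)) (N * Rabs (urn_dev m r))) as [H | H];
    destruct (Rle_dec (t * INR a / n) (Rabs (urn_dev m r))) as [H' | H'];
    try ring.
  - exfalso. apply H'. apply (Rmult_le_reg_l N); lra.
  - exfalso. apply H. apply Rmult_le_compat_l; lra.
Qed.

End PolyaUrn.

Theorem lemma4p8 (a b m : nat) (t : R) :
  (1 <= a + b)%nat -> 0 < t ->
  urn_dev_prob a b m t
    <= 2 * exp (- (t ^ 2 * INR a ^ 2) / (8 * INR (a + b))).
Proof.
  intros Hab Ht.
  set (n := INR (a + b)).
  assert (Hn : 0 < n) by (apply lt_0_INR; lia).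
  pose proof (pos_INR a).
  set (l := t * INR a / 2). set (s := t * INR a / n).
  assert (Hl : 0 <= l) by (unfold l; nra).
  rewrite urn_dev_prob_eq by exact Hab. fold n.
  eapply Rle_trans.
  { apply urn_expect_le. intros r _. apply (dev_indicator_le l s), Hl. }
  rewrite urn_expect_scal, urn_expect_plus.
  pose proof (urn_mgf_le_init a b Hab l m) as Hplus.
  pose proof (urn_mgf_le_init a b Hab (- l) m) as Hminus.
  replace ((- l) ^ 2) with (l ^ 2) in Hminus by ring.
  fold n in Hplus, Hminus.
  assert (Hexp : exp (l ^ 2 / n) * exp (- (l * s)) <= exp (- (t ^ 2 * INR a ^ 2) / (8 * n))).
  { rewrite <- exp_plus. apply exp_le. unfold l, s.
    assert (0 <= (t * INR a) ^ 2 / n) by (apply Rdiv_le_0_compat; nra).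
    replace (- (t ^ 2 * INR a ^ 2) / (8 * n)) with (- (1 / 8) * ((t * INR a) ^ 2 / n))
      by (field; lra).
    replace ((t * INR a / 2) ^ 2 / n + - (t * INR a / 2 * (t * INR a / n)))
      with (- (1 / 4) * ((t * INR a) ^ 2 / n)) by (field; lra).
    lra. }
  pose proof (exp_pos (- (l * s))).
  nra.
Qed.
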